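(* Let $A$ be a complex square matrix, $y$ a complex vector, and $k,m\ge1$ integers. Suppose there is a polynomial $P$ of degree at most $k$ with $P(0)=0$ such that the Hermitian part $H=\tfrac12(P(A)^*+P(A))$ of $P(A)$ is positive definite or negative definite. Consider an operator coefficient method of degree $k$ and order $m$ (an iteration producing $x_0,x_1,x_2,\ldots$) whose selection criterion chooses $x_{n+1}$ to minimize the $2$-norm of the residual $\|r_{n+1}\|_2$ (respectively of the error $\|e_{n+1}\|_2$) over its selection set, and whose selection set at each step contains the affine space $$x_n+\operatorname{span}\{r_n,\;Ar_n,\;A^2r_n,\;\ldots,\;A^{k-1}r_n\}.$$ Then the method converges, and at each step the minimized norm declines by at least the factor $$\sqrt{1-\left[\frac{\min|\lambda(H)|}{\|P(A)\|_2}\right]^2}<1,$$ i.e. $\|r_{n+1}\|_2\le \rho\|r_n\|_2$ (respectively $\|e_{n+1}\|_2\le\rho\|e_n\|_2$) with $\rho$ equal to this factor.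
   Context: For an iterate $x_j$, $r_j=y-Ax_j$ is its residual and $e_j=x_*-x_j$ its error, $x_*$ being the exact solution of $Ax=y$. $\lambda(H)$ is the set of eigenvalues of $H$; $\|\cdot\|_2$ is the Euclidean norm and induced matrix norm. An operator coefficient method of degree $k$ and order $m$, oc$(k,m)$, starts from $x_0$ (and optionally $x_{-1},\ldots,x_{1-m}$) and at each step chooses the next iterate, by some selection criterion, from a selection set that is a subset of the span of the vectors $x_{n},x_{n-1},\ldots,x_{n+1-m}$ and $A^{i}r_{n+1-j}$ for $0\le i\le k-1$, $1\le j\le m$ (in the homogeneous case with the coefficients of the $x$-vectors constrained to sum to $1$); the selection set need not use all of these vectors. *)

From HB Require Import structures.
From mathcomp Require Import all_boot all_order all_algebra.
From mathcomp Require Import classical_sets boolp reals topology normedtype sequences.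
From mathcomp Require Import complex.
Set Implicit Arguments. Unset Strict Implicit. Unset Printing Implicit Defensive.
Import Order.TTheory GRing.Theory Num.Theory.
Local Open Scope ring_scope.
Local Open Scope classical_set_scope.

Section Defs.
Variable R : realType.
Local Notation C := R[i].

Definition ctrmx (p q : nat) (M : 'M[C]_(p, q)) : 'M[C]_(q, p) :=
  map_mx (fun z => conjc z) M^T.

Definition vnorm (p : nat) (v : 'cV[C]_p) : R :=
  Num.sqrt (\sum_(i < p) ComplexField.Normc.normc (v i 0) ^+ 2).

Definition opnorm (p : nat) (M : 'M[C]_p) : R :=
  sup [set vnorm (M *m v) | v in [set v : 'cV[C]_p | vnorm v = 1]].

Definition herm_part (p : nat) (M : 'M[C]_p) : 'M[C]_p :=
  2%:R^-1 *: (ctrmx M + M).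

Definition posdef (p : nat) (H : 'M[C]_p) : Prop :=
  forall v : 'cV[C]_p, v != 0 -> 0 < (ctrmx v *m H *m v) 0 0.

Definition negdef (p : nat) (H : 'M[C]_p) : Prop :=
  forall v : 'cV[C]_p, v != 0 -> (ctrmx v *m H *m v) 0 0 < 0.

Definition min_abs_eig (p : nat) (H : 'M[C]_p) : R :=
  inf [set ComplexField.Normc.normc a | a in [set a : C | eigenvalue H a]].

(* The (linear) span from which an oc(k,m) method picks x_{n+1}:
   span{ x_n,...,x_{n+1-m},  A^i r_{n+1-j} (0<=i<=k-1, 1<=j<=m) },
   with iterates indexed by integers (x_{-1},...,x_{1-m} being the
   optional starting vectors). *)
Definition oc_span (p : nat) (A : 'M[C]_p) (y : 'cV[C]_p)
    (k m : nat) (x : int -> 'cV[C]_p) (n : nat) : set 'cV[C]_p :=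
  [set z | exists (a : 'I_m -> C) (b : 'I_k -> 'I_m -> C),
     z = \sum_(j < m) a j *: x (n%:Z - j%:Z)
       + \sum_(i < k) \sum_(j < m)
            b i j *: (A ^+ i *m (y - A *m x (n%:Z - j%:Z)))].

Definition oc_method (p : nat) (A : 'M[C]_p) (y : 'cV[C]_p) (k m : nat)
    (obj : 'cV[C]_p -> R) (S : nat -> set 'cV[C]_p) (x : int -> 'cV[C]_p) : Prop :=
  forall n : nat,
    S n `<=` oc_span A y k m x n /\
    S n (x (n.+1)%:Z) /\
    (forall z, S n z -> obj (x (n.+1)%:Z) <= obj z).

Definition contains_krylov (p : nat) (A : 'M[C]_p) (y : 'cV[C]_p) (k : nat)
    (S : nat -> set 'cV[C]_p) (x : int -> 'cV[C]_p) : Prop :=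
  forall (n : nat) (c : 'I_k -> C),
    S n (x n%:Z + \sum_(i < k) c i *: (A ^+ i *m (y - A *m x n%:Z))).

End Defs.

From HB Require Import structures.
From mathcomp Require Import all_boot all_order all_algebra.
From mathcomp Require Import classical_sets boolp reals topology normedtype sequences.
From mathcomp Require Import complex.
From mathcomp Require Import ring lra.
Import Order.TTheory GRing.Theory Num.Theory numFieldNormedType.Exports.
Local Open Scope ring_scope.
Local Open Scope classical_set_scope.
Set Implicit Arguments. Unset Strict Implicit. Unset Printing Implicit Defensive.

(* Since P(0) = 0, P(A) = Q(A) A = A Q(A) with deg Q < k, so the Krylov space
   x_n + span{r_n, ..., A^(k-1) r_n} contains x_n + al Q(A) r_n for every al;
   its error is e_n - al P(A) e_n and its residual r_n - al P(A) r_n.  Hence it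
   suffices that for every w some al gives |w - al P(A) w| <= rho |w|.  For the
   al projecting w orthogonally onto the line through M w, where M = P(A),
   |w - al M w|^2 = |w|^2 - |w* M w|^2 / |M w|^2, and
   |w* M w| >= Re (w* M w) = w* H w >= min |lambda(H)| |w|^2 by the spectral
   theorem, while |M w| <= |M| |w|.  The negative definite case follows by
   replacing P with -P.  For the residual criterion the error still tends to 0
   because the same estimate gives min |lambda(H)| |e| <= |Q(A)| |A e|. *)

Section InnerProduct.
Variable R : realType.
Local Notation C := R[i].
Local Notation normc := (@ComplexField.Normc.normc R).
Local Notation "x %:CC" := (real_complex R x) (at level 2, format "x %:CC").

Definition dot p (u v : 'cV[C]_p) : C := (ctrmx u *m v) 0 0.

Lemma normr_normc (z : C) : `|z| = (normc z)%:CC.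
Proof. by []. Qed.

Lemma conjcE (z : C) : conjc z = Num.conj z.
Proof. by case: z. Qed.

Lemma normc_ge0 (z : C) : 0 <= normc z.
Proof. by case: z => a b; exact: sqrtr_ge0. Qed.

Lemma normc_sqr (z : C) : (normc z ^+ 2)%:CC = z^* * z.
Proof. by rewrite rmorphXn /= -normr_normc normCKC. Qed.

Lemma normc_real (x : R) : 0 <= x -> normc x%:CC = x.
Proof. by move=> hx; rewrite /= expr0n addr0 sqrtr_sqr ger0_norm. Qed.

Lemma ctrmxE p q (M : 'M[C]_(p, q)) : ctrmx M = map_mx Num.conj M^T.
Proof. by apply/matrixP => i j; rewrite !mxE conjcE. Qed.

Lemma ctrmxK p q (M : 'M[C]_(p, q)) : ctrmx (ctrmx M) = M.
Proof. by apply/matrixP => i j; rewrite !mxE !conjcE conjCK. Qed.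

Lemma ctrmxM p q r (A : 'M[C]_(p, q)) (B : 'M[C]_(q, r)) :
  ctrmx (A *m B) = ctrmx B *m ctrmx A.
Proof.
apply/matrixP => i j; rewrite !mxE conjcE rmorph_sum; apply: eq_bigr => l _.
by rewrite !mxE !conjcE rmorphM /= mulrC.
Qed.

Lemma ctrmx0 p q : ctrmx (0 : 'M[C]_(p, q)) = 0.
Proof. by apply/matrixP => i j; rewrite !mxE conjcE conjC0. Qed.

Lemma ctrmx_eq0 p q (M : 'M[C]_(p, q)) : (ctrmx M == 0) = (M == 0).
Proof.
apply/eqP/eqP => [h|->]; last exact: ctrmx0.
by rewrite -[M]ctrmxK h ctrmx0.
Qed.

Lemma dotE p (u v : 'cV[C]_p) : dot u v = \sum_i (u i 0)^* * v i 0.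
Proof. by rewrite /dot mxE; apply: eq_bigr => i _; rewrite !mxE conjcE. Qed.

Lemma dotC p (u v : 'cV[C]_p) : dot v u = (dot u v)^*.
Proof.
rewrite !dotE rmorph_sum; apply: eq_bigr => i _.
by rewrite rmorphM /= conjCK mulrC.
Qed.

Lemma dotDr p (u v w : 'cV[C]_p) : dot u (v + w) = dot u v + dot u w.
Proof. by rewrite !dotE -big_split; apply: eq_bigr => i _; rewrite mxE mulrDr. Qed.

Lemma dotZr p (u v : 'cV[C]_p) a : dot u (a *: v) = a * dot u v.
Proof. by rewrite !dotE mulr_sumr; apply: eq_bigr => i _; rewrite mxE mulrCA. Qed.

Lemma dotBr p (u v w : 'cV[C]_p) : dot u (v - w) = dot u v - dot u w.
Proof. by rewrite dotDr -scaleN1r dotZr mulN1r. Qed.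

Lemma dotBl p (u v w : 'cV[C]_p) : dot (v - w) u = dot v u - dot w u.
Proof. by rewrite dotC dotBr rmorphB /= -!dotC. Qed.

Lemma dotZl p (u v : 'cV[C]_p) a : dot (a *: v) u = a^* * dot v u.
Proof. by rewrite dotC dotZr rmorphM /= -!dotC. Qed.

Lemma dot0r p (u : 'cV[C]_p) : dot u 0 = 0.
Proof. by rewrite /dot mulmx0 mxE. Qed.

Lemma dot_mulmx p (u v : 'cV[C]_p) (B : 'M[C]_p) :
  dot u (B *m v) = dot (ctrmx B *m u) v.
Proof. by rewrite /dot ctrmxM ctrmxK mulmxA. Qed.

Lemma vnorm_ge0 p (v : 'cV[C]_p) : 0 <= vnorm v.
Proof. exact: sqrtr_ge0. Qed.

Lemma vnorm_sqr p (v : 'cV[C]_p) : vnorm v ^+ 2 = \sum_i normc (v i 0) ^+ 2.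
Proof. by rewrite sqr_sqrtr // sumr_ge0 // => i _; rewrite sqr_ge0. Qed.

Lemma dotvv p (v : 'cV[C]_p) : dot v v = (vnorm v ^+ 2)%:CC.
Proof.
rewrite dotE vnorm_sqr rmorph_sum; apply: eq_bigr => i _.
by rewrite -normCKC normr_normc rmorphXn.
Qed.

Lemma vnorm_eq0 p (v : 'cV[C]_p) : (vnorm v == 0) = (v == 0).
Proof.
apply/eqP/eqP => [h|->]; last first.
  by rewrite /vnorm big1 ?sqrtr0 // => i _; rewrite mxE ComplexField.Normc.normc0 expr0n.
have /eqP : vnorm v ^+ 2 = 0 by rewrite h expr0n.
rewrite vnorm_sqr psumr_eq0 => [/allP hv|i _]; last by rewrite sqr_ge0.
apply/matrixP => i j; rewrite ord1 mxE; apply: ComplexField.Normc.eq0_normc.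
by have /implyP := hv i (mem_index_enum _); rewrite expf_eq0 /= => /(_ isT)/eqP.
Qed.

Lemma vnorm0 p : vnorm (0 : 'cV[C]_p) = 0.
Proof. by apply/eqP; rewrite vnorm_eq0. Qed.

Lemma vnorm_gt0 p (v : 'cV[C]_p) : (0 < vnorm v) = (v != 0).
Proof. by rewrite lt_def vnorm_ge0 vnorm_eq0 andbT. Qed.

Lemma dot_gt0 p (v : 'cV[C]_p) : v != 0 -> 0 < dot v v.
Proof. by move=> hv; rewrite dotvv ltcR exprn_gt0 // vnorm_gt0. Qed.

Lemma vnorm_sqr_inj p q (u : 'cV[C]_p) (v : 'cV[C]_q) :
  dot u u = dot v v -> vnorm u = vnorm v.
Proof.
rewrite !dotvv => /complexI /eqP; rewrite eqrXn2 ?vnorm_ge0 //; exact/eqP.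
Qed.

Lemma vnormZ p (v : 'cV[C]_p) a : vnorm (a *: v) = normc a * vnorm v.
Proof.
apply/eqP; rewrite -(eqrXn2 (_ : 0 < 2)%N) ?mulr_ge0 ?vnorm_ge0 ?normc_ge0 //.
apply/eqP/complexI; rewrite -dotvv dotZl dotZr dotvv exprMn [RHS]rmorphM /= normc_sqr.
by rewrite mulrA.
Qed.

Lemma vnorm_sub_proj p (w u : 'cV[C]_p) : u != 0 ->
  vnorm (w - ((dot w u)^* / dot u u) *: u) ^+ 2 =
  vnorm w ^+ 2 - normc (dot w u) ^+ 2 / vnorm u ^+ 2.
Proof.
move=> u0; have hU : dot u u != 0 by rewrite gt_eqF ?dot_gt0.
apply: complexI; rewrite -dotvv dotBl !dotBr !dotZl !dotZr [dot u w]dotC.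
rewrite rmorphM /= conjCK fmorphV /= -[(dot u u)^*]dotC.
have realC_div (a b : R) : (a / b)%:CC = a%:CC / b%:CC by rewrite rmorphM /= fmorphV.
rewrite [RHS]rmorphB /= realC_div normc_sqr -!dotvv.
set s := dot w u; set U := dot u u; set W := dot w w.
by field.
Qed.

Lemma cauchy_schwarz p (w u : 'cV[C]_p) :
  normc (dot w u) <= vnorm w * vnorm u.
Proof.
have [->|u0] := eqVneq u 0; first by rewrite dot0r vnorm0 mulr0 ComplexField.Normc.normc0.
rewrite -(ler_pXn2r (_ : 0 < 2)%N) ?nnegrE ?mulr_ge0 ?vnorm_ge0 ?normc_ge0 //.
have u2_gt0 : 0 < vnorm u ^+ 2 by rewrite exprn_gt0 ?vnorm_gt0.
have := sqr_ge0 (vnorm (w - ((dot w u)^* / dot u u) *: u)).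
by rewrite vnorm_sub_proj // subr_ge0 ler_pdivrMr // exprMn.
Qed.

Lemma normc_entry_le p (v : 'cV[C]_p) i : normc (v i 0) <= vnorm v.
Proof.
rewrite -(ler_pXn2r (_ : 0 < 2)%N) ?nnegrE ?normc_ge0 ?vnorm_ge0 //.
rewrite vnorm_sqr (bigD1 i) //= lerDl sumr_ge0 // => j _; exact: sqr_ge0.
Qed.

Lemma vnorm_mulmx_bounded p (B : 'M[C]_p) :
  exists2 K, 0 <= K & forall v, vnorm (B *m v) <= K * vnorm v.
Proof.
pose row_sum i := \sum_j normc (B i j).
exists (Num.sqrt (\sum_i row_sum i ^+ 2)) => [|v]; first exact: sqrtr_ge0.
rewrite -(ler_pXn2r (_ : 0 < 2)%N) ?nnegrE ?mulr_ge0 ?sqrtr_ge0 ?vnorm_ge0 //.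
rewrite exprMn [X in _ <= X * _]sqr_sqrtr; last by rewrite sumr_ge0 // => i _; exact: sqr_ge0.
rewrite [X in X <= _]vnorm_sqr mulr_suml; apply: ler_sum => i _; rewrite -exprMn.
rewrite ler_pXn2r ?nnegrE ?normc_ge0 ?mulr_ge0 ?vnorm_ge0 ?sumr_ge0 // => [|j _];
  last exact: normc_ge0.
rewrite -lecR -normr_normc mxE rmorphM /= rmorph_sum mulr_suml.
apply: le_trans (ler_norm_sum _ _ _) _; apply: ler_sum => j _.
rewrite normrM normr_normc; apply: ler_wpM2l; first by rewrite -normr_normc.
by rewrite normr_normc lecR normc_entry_le.
Qed.

Lemma vnorm_mulmx_le_opnorm p (M : 'M[C]_p) v :
  vnorm (M *m v) <= opnorm M * vnorm v.
Proof.
have [-> | v0] := eqVneq v 0; first by rewrite mulmx0 vnorm0 mulr0.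
have [K K0 hK] := vnorm_mulmx_bounded M.
have hub : has_ubound [set vnorm (M *m u) | u in [set u | vnorm u = 1]].
  by exists K => _ [u /= u1 <-]; rewrite -[K]mulr1 -u1 hK.
have v_gt0 : 0 < vnorm v by rewrite vnorm_gt0.
set c := (vnorm v)^-1; have c_ge0 : 0 <= c by rewrite invr_ge0 ltW.
have cv1 : vnorm (c%:CC *: v) = 1 by rewrite vnormZ normc_real // mulVf ?gt_eqF.
have := ub_le_sup hub (ex_intro2 _ _ (c%:CC *: v) cv1 erefl).
by rewrite -scalemxAr vnormZ normc_real // mulrC ler_pdivrMr.
Qed.

Lemma vnormN p (v : 'cV[C]_p) : vnorm (- v) = vnorm v.
Proof. by rewrite -scaleN1r vnormZ normcN ComplexField.Normc.normc1 mul1r. Qed.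

Lemma opnormN p (M : 'M[C]_p) : opnorm (- M) = opnorm M.
Proof.
rewrite /opnorm; apply: congr1; apply/seteqP; split => _ [v v1 <-];
  by exists v => //; rewrite mulNmx vnormN.
Qed.

End InnerProduct.

Section Spectral.
Variable R : realType.
Local Notation C := R[i].
Local Notation normc := (@ComplexField.Normc.normc R).
Local Notation "x %:CC" := (real_complex R x) (at level 2, format "x %:CC").

Lemma finite_pos_lbound n (f : 'I_n -> R) :
  (forall j, 0 < f j) -> exists2 c, 0 < c & forall j, c <= f j.
Proof.
move=> f_gt0; have s_ge0 : 0 <= \sum_j (f j)^-1.
  by rewrite sumr_ge0 // => j _; rewrite invr_ge0 ltW.
exists (1 + \sum_j (f j)^-1)^-1 => [|j]; first by rewrite invr_gt0 ltr_wpDr.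
rewrite -[f j]invrK lef_pV2 ?posrE ?invr_gt0 ?ltr_wpDr //.
by rewrite (bigD1 j) //= addrCA lerDl addr_ge0 // sumr_ge0 // => i _; rewrite invr_ge0 ltW.
Qed.

Lemma eigenvalue_dot p (H : 'M[C]_p) a :
  eigenvalue H a -> exists2 w, w != 0 & dot w (H *m w) = a * dot w w.
Proof.
move=> /eigenvalueP [v Hv v0]; exists (ctrmx v); first by rewrite ctrmx_eq0.
by rewrite /dot ctrmxK mulmxA Hv -scalemxAl mxE.
Qed.

Lemma posdef_eigenvalue_gt0 p (H : 'M[C]_p) a :
  posdef H -> eigenvalue H a -> 0 < a.
Proof.
move=> H_pd /eigenvalue_dot [w w0 Hw].
have := H_pd w w0; rewrite -mulmxA -/(dot w (H *m w)) Hw.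
by rewrite pmulr_lgt0 // dot_gt0.
Qed.

Lemma eigenvalueN p (H : 'M[C]_p) a : eigenvalue (- H) a = eigenvalue H (- a).
Proof.
apply/eigenvalueP/eigenvalueP => -[v Hv v0]; exists v => //.
  by rewrite scaleNr -Hv mulmxN opprK.
by rewrite mulmxN Hv scaleNr opprK.
Qed.

Lemma min_abs_eigN p (H : 'M[C]_p) : min_abs_eig (- H) = min_abs_eig H.
Proof.
rewrite /min_abs_eig; apply: congr1; apply/seteqP.
split => _ [a Ha <-]; (exists (- a); last exact: normcN).
  by rewrite /= -eigenvalueN.
by rewrite /= eigenvalueN opprK.
Qed.

Section HermitianSpectral.
Variables (n : nat) (H : 'M[C]_n).
Hypothesis H_herm : H \is hermsymmx.
Local Notation U := (spectralmx H).
Local Notation D := (spectral_diag H).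

Let H_spectral : H = invmx U *m diag_mx D *m U.
Proof. exact/orthomx_spectralP/hermitian_normalmx. Qed.

Let invmx_U : invmx U = ctrmx U.
Proof. by rewrite invmx_unitary ?spectral_unitarymx // ctrmxE. Qed.

Lemma vnorm_spectralmx w : vnorm (U *m w) = vnorm w.
Proof.
by apply: vnorm_sqr_inj; rewrite dot_mulmx mulmxA -invmx_U mulVmx ?spectral_unit ?mul1mx.
Qed.

Lemma dot_hermitian_spectral w :
  dot w (H *m w) = \sum_j D 0 j * (normc ((U *m w) j 0) ^+ 2)%:CC.
Proof.
rewrite [in H *m w]H_spectral -!mulmxA dot_mulmx invmx_U ctrmxK dotE.
apply: eq_bigr => j _; rewrite mul_diag_mx normc_sqr.
by rewrite [X in _ * X = _]mxE mulrCA.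
Qed.

Lemma spectral_diag_eigenvalue j : eigenvalue H (D 0 j).
Proof.
apply/eigenvalueP; exists (delta_mx 0 j *m U).
  rewrite [X in _ *m X = _]H_spectral !mulmxA mulmxK ?spectral_unit //.
  rewrite scalemxAl; congr (_ *m _); apply/matrixP => i k.
  rewrite mul_mx_diag !mxE ord1 eqxx /=.
  by case: eqVneq => [->|_]; rewrite ?mulr1 ?mul1r ?mulr0 ?mul0r.
rewrite mul_mx_rowfree_eq0 ?row_free_unit ?spectral_unit //.
by apply/eqP => /matrixP/(_ 0 j); rewrite !mxE eqxx /= => /eqP; rewrite eqxx oner_eq0.
Qed.

Lemma dot_hermitian_ge c :
  (forall j, c%:CC <= D 0 j) -> forall w, (c * vnorm w ^+ 2)%:CC <= dot w (H *m w).
Proof.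
move=> cD w; rewrite dot_hermitian_spectral -vnorm_spectralmx vnorm_sqr mulr_sumr.
rewrite rmorph_sum; apply: ler_sum => j _; rewrite rmorphM /=.
by apply: ler_wpM2r; rewrite ?ler0c ?sqr_ge0.
Qed.

Lemma posdef_dot_ge_min_abs_eig : posdef H ->
  forall w, (min_abs_eig H * vnorm w ^+ 2)%:CC <= dot w (H *m w).
Proof.
move=> H_pd; apply: dot_hermitian_ge => j.
have D_gt0 := posdef_eigenvalue_gt0 H_pd (spectral_diag_eigenvalue j).
rewrite -[D 0 j]gtr0_norm // normr_normc lecR; apply: ge_inf.
  by exists 0 => _ [a _ <-]; exact: normc_ge0.
by exists (D 0 j) => //; exact: spectral_diag_eigenvalue.
Qed.

End HermitianSpectral.

Lemma posdef_min_abs_eig_gt0 n (H : 'M[C]_n.+1) :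
  H \is hermsymmx -> posdef H -> 0 < min_abs_eig H.
Proof.
(* A positive lower bound [c] of the spectral diagonal bounds every eigenvalue
   [a] from below, since [a |w|^2 = w* H w >= c |w|^2] for an eigenvector [w]. *)
move=> H_herm H_pd.
have D_gt0 j := posdef_eigenvalue_gt0 H_pd (spectral_diag_eigenvalue H_herm j).
have [c c_gt0 cD] : exists2 c, 0 < c & forall j, c <= normc (spectral_diag H 0 j).
  by apply: finite_pos_lbound => j; rewrite -ltcR -normr_normc normr_gt0 gt_eqF.
have cD' j : c%:CC <= spectral_diag H 0 j.
  by rewrite -[spectral_diag H 0 j]gtr0_norm // normr_normc lecR.
apply: lt_le_trans c_gt0 _; apply: lb_le_inf.
  by exists (normc (spectral_diag H 0 ord0)), (spectral_diag H 0 ord0);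
    rewrite //= spectral_diag_eigenvalue.
move=> _ [a /= Ha <-]; have a_gt0 := posdef_eigenvalue_gt0 H_pd Ha.
have [w w0 Hw] := eigenvalue_dot Ha.
have := dot_hermitian_ge H_herm cD' w.
rewrite Hw dotvv -{1}[a]gtr0_norm // normr_normc -rmorphM lecR ler_pM2r //.
by rewrite exprn_gt0 ?vnorm_gt0.
Qed.

End Spectral.

Section MinimalResidualStep.
Variable R : realType.
Local Notation C := R[i].
Local Notation normc := (@ComplexField.Normc.normc R).
Local Notation "x %:CC" := (real_complex R x) (at level 2, format "x %:CC").

Lemma herm_part_hermitian p (M : 'M[C]_p) : herm_part M \is hermsymmx.
Proof.
apply/is_hermitianmxP; rewrite expr0 scale1r.
apply/matrixP => i j; rewrite !mxE rmorphM /= rmorphD /= !conjcE conjCK.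
by rewrite fmorphV /= conjC_nat addrC.
Qed.

Lemma herm_partN p (M : 'M[C]_p) : herm_part (- M) = - herm_part M.
Proof.
rewrite /herm_part -scalerN opprD; congr (_ *: (_ + _)).
by apply/matrixP => i j; rewrite !mxE rmorphN.
Qed.

Lemma dot_herm_part p (M : 'M[C]_p) w :
  dot w (herm_part M *m w) = 'Re (dot w (M *m w)).
Proof.
rewrite /herm_part -scalemxAl dotZr mulmxDl dotDr ReE.
by rewrite dot_mulmx ctrmxK -dotC mulrC addrC.
Qed.

Lemma posdef_herm_part_dot_ge p (M : 'M[C]_p) : posdef (herm_part M) ->
  forall w, min_abs_eig (herm_part M) * vnorm w ^+ 2 <= normc (dot w (M *m w)).
Proof.
move=> M_pd w; rewrite -lecR -normr_normc.
apply: le_trans (posdef_dot_ge_min_abs_eig (herm_part_hermitian M) M_pd w) _.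
by rewrite dot_herm_part; exact: (leif_Re_Creal _).1.
Qed.

Lemma min_abs_eig_herm_part_le_opnorm n (M : 'M[C]_n.+1) :
  posdef (herm_part M) -> min_abs_eig (herm_part M) <= opnorm M.
Proof.
move=> M_pd; pose w : 'cV[C]_n.+1 := const_mx 1.
have w_gt0 : 0 < vnorm w.
  by rewrite vnorm_gt0; apply/eqP => /matrixP/(_ 0 0); rewrite !mxE => /eqP; rewrite oner_eq0.
rewrite -(ler_pM2r (_ : 0 < vnorm w ^+ 2)) ?exprn_gt0 //.
apply: le_trans (posdef_herm_part_dot_ge M_pd w) _.
apply: le_trans (cauchy_schwarz _ _) _.
by rewrite expr2 mulrA [X in _ <= X]mulrC ler_wpM2l ?vnorm_ge0 ?vnorm_mulmx_le_opnorm.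
Qed.

Definition oc_rate p (M : 'M[C]_p) : R :=
  Num.sqrt (1 - (min_abs_eig (herm_part M) / opnorm M) ^+ 2).

Lemma oc_rateN p (M : 'M[C]_p) : oc_rate (- M) = oc_rate M.
Proof. by rewrite /oc_rate herm_partN min_abs_eigN opnormN. Qed.

Lemma oc_rate_lt1 n (M : 'M[C]_n.+1) : posdef (herm_part M) -> oc_rate M < 1.
Proof.
move=> M_pd; have mu_gt0 := posdef_min_abs_eig_gt0 (herm_part_hermitian M) M_pd.
have L_gt0 := lt_le_trans mu_gt0 (min_abs_eig_herm_part_le_opnorm M_pd).
have : 0 < (min_abs_eig (herm_part M) / opnorm M) ^+ 2 by rewrite exprn_gt0 ?divr_gt0.
by move=> r_gt0; rewrite /oc_rate -[X in _ < X]sqrtr1 ltr_sqrt //; lra.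
Qed.

Lemma sqr_ratio_le (a b m l q : R) : 0 < a -> 0 < b -> 0 < l -> 0 <= m ->
  m * a ^+ 2 <= q -> b <= l * a -> (m / l) ^+ 2 * a ^+ 2 <= q ^+ 2 / b ^+ 2.
Proof.
move=> a_gt0 b_gt0 l_gt0 m_ge0 hq hb.
have la_gt0 : 0 < l * a by rewrite mulr_gt0.
have q_ge0 : 0 <= q by apply: le_trans hq; rewrite mulr_ge0 ?sqr_ge0.
have ratio_le : m / l * a <= q / b.
  have -> : m / l * a = m * a ^+ 2 / (l * a) by field; rewrite !gt_eqF.
  apply: (@le_trans _ _ (q / (l * a))); first by rewrite ler_wpM2r // invr_ge0 ltW.
  by rewrite ler_wpM2l // lef_pV2 ?posrE.
have ratio_ge0 : 0 <= m / l * a by rewrite mulr_ge0 ?divr_ge0 // ltW.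
by rewrite -expr_div_n -exprMn ler_pXn2r ?nnegrE // (le_trans ratio_ge0).
Qed.

Lemma min_residual_step n (M : 'M[C]_n.+1) : posdef (herm_part M) ->
  forall w, exists al : C, vnorm (w - al *: (M *m w)) <= oc_rate M * vnorm w.
Proof.
move=> M_pd w; have [-> | w0] := eqVneq w 0.
  by exists 0; rewrite mulmx0 scaler0 subr0 vnorm0 mulr0.
have mu_gt0 := posdef_min_abs_eig_gt0 (herm_part_hermitian M) M_pd.
have L_gt0 := lt_le_trans mu_gt0 (min_abs_eig_herm_part_le_opnorm M_pd).
have w_gt0 : 0 < vnorm w by rewrite vnorm_gt0.
have hs := posdef_herm_part_dot_ge M_pd w.
have Mw0 : M *m w != 0.
  apply: contraTneq hs => ->; rewrite dot0r ComplexField.Normc.normc0 -ltNge.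
  by rewrite mulr_gt0 ?exprn_gt0.
(* [al *: (M *m w)] is the orthogonal projection of [w] on the line through [M *m w]. *)
exists ((dot w (M *m w))^* / dot (M *m w) (M *m w)).
have r_le1 : 0 <= 1 - (min_abs_eig (herm_part M) / opnorm M) ^+ 2.
  rewrite subr_ge0; apply: exprn_ile1; first by rewrite divr_ge0 ?ltW.
  by rewrite ler_pdivrMr // mul1r min_abs_eig_herm_part_le_opnorm.
rewrite -(ler_pXn2r (_ : 0 < 2)%N) ?nnegrE ?mulr_ge0 ?vnorm_ge0 ?sqrtr_ge0 //.
rewrite vnorm_sub_proj // exprMn [X in _ <= X * _]sqr_sqrtr // mulrBl mul1r lerD2l lerN2.
by apply: sqr_ratio_le; rewrite ?vnorm_gt0 ?vnorm_mulmx_le_opnorm ?(ltW mu_gt0).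
Qed.

End MinimalResidualStep.

Lemma horner_mx_Xfactor (F : comNzRingType) n (A : 'M[F]_n.+1) (P : {poly F}) k :
  (size P <= k.+1)%N -> P.[0] = 0 ->
  let Q := \sum_(i < k) P`_i.+1 *: A ^+ i in
  horner_mx A P = Q *m A /\ horner_mx A P = A *m Q.
Proof.
move=> P_size P0 Q.
have P_X : P = \poly_(i < k) P`_i.+1 * 'X.
  apply/polyP => -[|j]; rewrite coefMX coef_poly /=; first by rewrite -horner_coef0.
  by case: ltnP => // kj; rewrite nth_default // (leq_trans P_size).
have Q_horner : horner_mx A (\poly_(i < k) P`_i.+1) = Q.
  rewrite poly_def rmorph_sum; apply: eq_bigr => i _.
  by rewrite /= horner_mxZ rmorphXn /= horner_mx_X.
have PQA : horner_mx A P = Q *m A.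
  by rewrite {1}P_X rmorphM /= horner_mx_X Q_horner mulmxE.
split => //; rewrite PQA -Q_horner mulmxE.
by have := comm_horner_mx2 A (\poly_(i < k) P`_i.+1) 'X; rewrite horner_mx_X.
Qed.

Lemma geometric_bound_cvg0 (R : realType) (f g : nat -> R) (K rho : R) :
  0 <= K -> 0 <= rho -> rho < 1 ->
  (forall n, 0 <= f n <= K * g n) -> (forall n, g n.+1 <= rho * g n) ->
  f @ \oo --> 0.
Proof.
move=> K_ge0 rho_ge0 rho_lt1 f_bound g_step.
have g_geo n : g n <= rho ^+ n * g 0.
  elim: n => [|n IHn]; first by rewrite expr0 mul1r.
  by rewrite (le_trans (g_step n)) // exprS -mulrA ler_wpM2l.
apply: (@squeeze_cvgr _ _ _ _ (fun _ => 0) (fun n => K * g 0 * rho ^+ n)).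
- apply: nearW => n; have /andP[-> /le_trans] := f_bound n; apply.
  by rewrite -mulrA ler_wpM2l // mulrC g_geo.
- exact: cvg_cst.
- rewrite -[X in _ --> X](mulr0 (K * g 0)); apply: cvgMl_tmp.
  by apply: cvg_expr; rewrite ger0_norm.
Qed.

Section OperatorCoefficientMethod.
Variable R : realType.
Local Notation C := R[i].

Lemma vnorm_le_mulmx n (M Q A : 'M[C]_n.+1) :
  posdef (herm_part M) -> M = Q *m A ->
  exists2 K, 0 <= K & forall e, vnorm e <= K * vnorm (A *m e).
Proof.
move=> M_pd MQA; have [KQ KQ_ge0 KQ_bound] := vnorm_mulmx_bounded Q.
have mu_gt0 := posdef_min_abs_eig_gt0 (herm_part_hermitian M) M_pd.
exists (KQ / min_abs_eig (herm_part M)) => [|e]; first by rewrite divr_ge0 // ltW.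
have [-> | e0] := eqVneq e 0; first by rewrite vnorm0 mulr_ge0 ?divr_ge0 ?vnorm_ge0 // ltW.
have e_gt0 : 0 < vnorm e by rewrite vnorm_gt0.
rewrite mulrAC ler_pdivlMr // -(ler_pM2l e_gt0) mulrA -expr2 mulrC.
apply: le_trans (posdef_herm_part_dot_ge M_pd e) _.
apply: le_trans (cauchy_schwarz _ _) _.
by rewrite ler_wpM2l ?vnorm_ge0 // MQA -mulmxA KQ_bound.
Qed.

Variables (N : nat) (A : 'M[C]_N.+1) (y xs : 'cV[C]_N.+1) (k m : nat).
Variables (P : {poly C}) (S : nat -> set 'cV[C]_N.+1) (x : int -> 'cV[C]_N.+1).
Hypotheses (P_size : (size P <= k.+1)%N) (P0 : P.[0] = 0).
Hypothesis PA_pd : posdef (herm_part (horner_mx A P)).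
Hypothesis xs_sol : A *m xs = y.
Local Notation M := (horner_mx A P).

Definition oc_obj (residual_crit : bool) (z : 'cV[C]_N.+1) : R :=
  if residual_crit then vnorm (y - A *m z) else vnorm (xs - z).

Lemma oc_obj_contraction residual_crit :
  oc_method A y k m (oc_obj residual_crit) S x -> contains_krylov A y k S x ->
  forall n : nat, oc_obj residual_crit (x n.+1) <= oc_rate M * oc_obj residual_crit (x n).
Proof.
move=> oc krylov n; set xn := x n%:Z.
have [MQA MAQ] := horner_mx_Xfactor A P_size P0.
set Q := \sum_(i < k) _ in MQA MAQ.
pose w := if residual_crit then y - A *m xn else xs - xn.
have [al step] := min_residual_step PA_pd w.
have S_step := krylov n (fun i => al * P`_i.+1).
apply: le_trans ((oc n).2.2 _ S_step) _.
have -> : \sum_(i < k) (al * P`_i.+1) *: (A ^+ i *m (y - A *m xn)) =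
          al *: (Q *m (y - A *m xn)).
  rewrite /Q mulmx_suml scaler_sumr; apply: eq_bigr => i _.
  by rewrite -scalemxAl scalerA.
rewrite /oc_obj {oc}; case: residual_crit in w step *.
  by rewrite mulmxDr -scalemxAr mulmxA -MAQ opprD addrA.
by rewrite -xs_sol -mulmxBr mulmxA -MQA opprD addrA.
Qed.

Lemma oc_error_le_obj residual_crit :
  exists2 K, 0 <= K & forall z, vnorm (xs - z) <= K * oc_obj residual_crit z.
Proof.
rewrite /oc_obj; case: residual_crit; last by exists 1 => // z; rewrite mul1r.
have [MQA _] := horner_mx_Xfactor A P_size P0.
have [K K_ge0 K_bound] := vnorm_le_mulmx PA_pd MQA.
by exists K => // z; rewrite -xs_sol -mulmxBr.
Qed.

Lemma oc_posdef_convergence residual_crit :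
  oc_method A y k m (oc_obj residual_crit) S x -> contains_krylov A y k S x ->
  oc_rate M < 1 /\
  (forall n : nat, oc_obj residual_crit (x n.+1) <= oc_rate M * oc_obj residual_crit (x n)) /\
  ((fun n : nat => vnorm (xs - x n%:Z)) @ \oo --> (0 : R)).
Proof.
move=> oc krylov; have rate_lt1 := oc_rate_lt1 PA_pd.
have contraction := oc_obj_contraction oc krylov.
do 2!split => //; have [K K_ge0 K_bound] := oc_error_le_obj residual_crit.
apply: (geometric_bound_cvg0 K_ge0 (sqrtr_ge0 _) rate_lt1 _ contraction).
by move=> n; rewrite vnorm_ge0 K_bound.
Qed.

End OperatorCoefficientMethod.

Theorem mainTheorem2 (R : realType) (N : nat)
    (A : 'M[R[i]]_N.+1) (y : 'cV[R[i]]_N.+1) (k m : nat)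
    (hk : (1 <= k)%N) (hm : (1 <= m)%N)
    (P : {poly R[i]}) (hPdeg : (size P <= k.+1)%N) (hP0 : P.[0] = 0)
    (hdef : posdef (herm_part (horner_mx A P)) \/
            negdef (herm_part (horner_mx A P)))
    (xs : 'cV[R[i]]_N.+1) (hxs : A *m xs = y)
    (residual_crit : bool)
    (S : nat -> set 'cV[R[i]]_N.+1) (x : int -> 'cV[R[i]]_N.+1) :
  let obj := fun z : 'cV[R[i]]_N.+1 =>
    if residual_crit then vnorm (y - A *m z) else vnorm (xs - z) in
  oc_method A y k m obj S x ->
  contains_krylov A y k S x ->
  let rho := Num.sqrt (1 - (min_abs_eig (herm_part (horner_mx A P))
                            / opnorm (horner_mx A P)) ^+ 2) in
  rho < 1 /\
  (forall n : nat, obj (x (n.+1)%:Z) <= rho * obj (x n%:Z)) /\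
  ((fun n : nat => vnorm (xs - x n%:Z)) @ \oo --> (0 : R)).
Proof.
case: hdef => [PA_pd | PA_nd]; first exact: oc_posdef_convergence.
have NPA_pd : posdef (herm_part (horner_mx A (- P))).
  by move=> v v0; rewrite rmorphN herm_partN mulmxN mulNmx mxE oppr_gt0 PA_nd.
have NP_size : (size (- P) <= k.+1)%N by rewrite size_polyN.
have NP0 : (- P).[0] = 0 by rewrite hornerN hP0 oppr0.
have := @oc_posdef_convergence R N A y xs k m (- P) S x NP_size NP0 NPA_pd hxs residual_crit.
by rewrite rmorphN oc_rateN.
Qed.
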